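(* Consider unknown functions $\theta_1,\theta_2,\theta_3,\theta_4,\theta_1'$ of $(z,\tau)$ and unknown coefficient functions $\vartheta_2,\vartheta_3,\vartheta_4,\eta$ of $\tau$ alone, subject to the system (S$_z$) and (S$_\tau$) given in the context. This system is compatible (i.e. the mixed derivatives $\partial_\tau\partial_z$ and $\partial_z\partial_\tau$ of each of the five unknowns, computed via the system, agree) if and only if the coefficients satisfy $$\frac{d\vartheta_2}{d\tau}=\frac{i}{\pi}\Big\{\eta+\frac{\pi^2}{12}(\vartheta_3^4+\vartheta_4^4)\Big\}\vartheta_2,\quad \frac{d\vartheta_3}{d\tau}=\frac{i}{\pi}\Big\{\eta+\frac{\pi^2}{12}(\vartheta_3^4+\vartheta_4^4-3\mathbf{B}^4\vartheta_4^4)\Big\}\vartheta_3,$$ $$\frac{d\vartheta_4}{d\tau}=\frac{i}{\pi}\Big\{\eta+\frac{\pi^2}{12}(\vartheta_3^4+\vartheta_4^4-3\mathbf{A}^4\vartheta_3^4)\Big\}\vartheta_4,\quad \frac{d\eta}{d\tau}=\frac{i}{\pi}2\eta^2-\frac{\pi^3}{72}i\big\{\vartheta_3^8+(9\mathbf{A}^4\mathbf{B}^4-6\mathbf{A}^4-6\mathbf{B}^4+2)\vartheta_3^4\vartheta_4^4+\vartheta_4^8\big\},$$ where $\mathbf{A}^4,\mathbf{B}^4$ are defined by $\mathbf{A}^4\vartheta_3^2\theta_1^2=\vartheta_2^2\theta_4^2-\vartheta_4^2\theta_2^2$ and $\mathbf{B}^4\vartheta_4^2\theta_1^2=\vartheta_2^2\theta_3^2-\vartheta_3^2\theta_2^2$,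 and these are algebraic first integrals of the system: on its solutions $\partial_z\mathbf{A}=\partial_z\mathbf{B}=\partial_\tau\mathbf{A}=\partial_\tau\mathbf{B}=0$. The three functions $(\vartheta_3,\vartheta_4,\eta)$ are differentially closed under these equations.
   Context: Let $\Lambda_0=\eta+\frac{\pi^2}{12}(\vartheta_3^4+\vartheta_4^4)$. System (S$_z$): $\partial_z\theta_1=\theta_1'$; $\partial_z\theta_2=\frac{\theta_1'}{\theta_1}\theta_2-\pi\vartheta_2^2\frac{\theta_3\theta_4}{\theta_1}$; $\partial_z\theta_3=\frac{\theta_1'}{\theta_1}\theta_3-\pi\vartheta_3^2\frac{\theta_2\theta_4}{\theta_1}$; $\partial_z\theta_4=\frac{\theta_1'}{\theta_1}\theta_4-\pi\vartheta_4^2\frac{\theta_2\theta_3}{\theta_1}$; $\partial_z\theta_1'=\frac{\theta_1'^2}{\theta_1}-\pi^2\vartheta_3^2\vartheta_4^2\frac{\theta_2^2}{\theta_1}-4\Lambda_0\theta_1$. System (S$_\tau$): $\partial_\tau\theta_1=\frac{-i}{4\pi}\frac{\theta_1'^2}{\theta_1}+\frac{i\pi}{4}\vartheta_3^2\vartheta_4^2\frac{\theta_2^2}{\theta_1}+\frac i\pi\Lambda_0\theta_1$; $\partial_\tau\theta_2=\frac{-i}{4\pi}\frac{\theta_1'^2}{\theta_1^2}\theta_2+\frac i2\vartheta_2^2\theta_1'\frac{\theta_3\theta_4}{\theta_1^2}+\frac{i\pi}{4}(\vartheta_3^2\vartheta_4^2\theta_2^2-\vartheta_2^2\vartheta_4^2\theta_3^2-\vartheta_2^2\vartheta_3^2\theta_4^2)\frac{\theta_2}{\theta_1^2}+\frac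 i\pi\Lambda_0\theta_2$; $\partial_\tau\theta_3=\frac{-i}{4\pi}\frac{\theta_1'^2}{\theta_1^2}\theta_3+\frac i2\vartheta_3^2\theta_1'\frac{\theta_2\theta_4}{\theta_1^2}-\frac{i\pi}{4}\vartheta_2^2\vartheta_3^2\frac{\theta_4^2}{\theta_1^2}\theta_3+\frac i\pi\Lambda_0\theta_3$; $\partial_\tau\theta_4=\frac{-i}{4\pi}\frac{\theta_1'^2}{\theta_1^2}\theta_4+\frac i2\vartheta_4^2\theta_1'\frac{\theta_2\theta_3}{\theta_1^2}-\frac{i\pi}{4}\vartheta_2^2\vartheta_4^2\frac{\theta_3^2}{\theta_1^2}\theta_4+\frac i\pi\Lambda_0\theta_4$; $\partial_\tau\theta_1'=\frac{-i}{4\pi}\frac{\theta_1'^3}{\theta_1^2}+\frac{3i}{\pi}\{\frac{\pi^2}{4}\vartheta_3^2\vartheta_4^2\frac{\theta_2^2}{\theta_1^2}+\Lambda_0\}\theta_1'-\frac i2\pi^2\vartheta_2^2\vartheta_3^2\vartheta_4^2\frac{\theta_2\theta_3\theta_4}{\theta_1^2}$. *)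

From Stdlib Require Import Reals.
From Coquelicot Require Import Coquelicot.
Open Scope C_scope.

(* A point of the (extended) phase space: values of the five unknowns
   theta_1, theta_2, theta_3, theta_4, theta_1' and of the four
   coefficients vartheta_2, vartheta_3, vartheta_4, eta. *)
Record St : Type := mkSt {
  th1 : C; th2 : C; th3 : C; th4 : C; th1p : C;
  vt2 : C; vt3 : C; vt4 : C; eta : C }.

Definition piC : C := RtoC PI.

Definition shift (p X : St) (s : C) : St :=
  mkSt (th1 p + s * th1 X) (th2 p + s * th2 X) (th3 p + s * th3 X)
       (th4 p + s * th4 X) (th1p p + s * th1p X)
       (vt2 p + s * vt2 X) (vt3 p + s * vt3 X) (vt4 p + s * vt4 X)
       (eta p + s * eta X).

(* Derivative of F along the vector X at p (chain rule / total derivative):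
   [c] is the complex derivative at s = 0 of s |-> F (p + s X). *)
Definition DerAlong (F : St -> C) (p X : St) (c : C) : Prop :=
  @is_derive C_AbsRing C_NormedModule (fun s : C => F (shift p X s)) (RtoC 0) c.

Definition Lam0 (p : St) : C :=
  eta p + piC ^ 2 / 12 * (vt3 p ^ 4 + vt4 p ^ 4).

Definition Fz1 (p : St) : C := th1p p.
Definition Fz2 (p : St) : C :=
  th1p p / th1 p * th2 p - piC * vt2 p ^ 2 * (th3 p * th4 p / th1 p).
Definition Fz3 (p : St) : C :=
  th1p p / th1 p * th3 p - piC * vt3 p ^ 2 * (th2 p * th4 p / th1 p).
Definition Fz4 (p : St) : C :=
  th1p p / th1 p * th4 p - piC * vt4 p ^ 2 * (th2 p * th3 p / th1 p).
Definition Fz5 (p : St) : C :=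
  th1p p ^ 2 / th1 p - piC ^ 2 * vt3 p ^ 2 * vt4 p ^ 2 * (th2 p ^ 2 / th1 p)
  - 4 * Lam0 p * th1 p.

Definition Ft1 (p : St) : C :=
  - Ci / (4 * piC) * (th1p p ^ 2 / th1 p)
  + Ci * piC / 4 * vt3 p ^ 2 * vt4 p ^ 2 * (th2 p ^ 2 / th1 p)
  + Ci / piC * Lam0 p * th1 p.
Definition Ft2 (p : St) : C :=
  - Ci / (4 * piC) * (th1p p ^ 2 / th1 p ^ 2) * th2 p
  + Ci / 2 * vt2 p ^ 2 * th1p p * (th3 p * th4 p / th1 p ^ 2)
  + Ci * piC / 4 * (vt3 p ^ 2 * vt4 p ^ 2 * th2 p ^ 2
                    - vt2 p ^ 2 * vt4 p ^ 2 * th3 p ^ 2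
                    - vt2 p ^ 2 * vt3 p ^ 2 * th4 p ^ 2) * (th2 p / th1 p ^ 2)
  + Ci / piC * Lam0 p * th2 p.
Definition Ft3 (p : St) : C :=
  - Ci / (4 * piC) * (th1p p ^ 2 / th1 p ^ 2) * th3 p
  + Ci / 2 * vt3 p ^ 2 * th1p p * (th2 p * th4 p / th1 p ^ 2)
  - Ci * piC / 4 * vt2 p ^ 2 * vt3 p ^ 2 * (th4 p ^ 2 / th1 p ^ 2) * th3 p
  + Ci / piC * Lam0 p * th3 p.
Definition Ft4 (p : St) : C :=
  - Ci / (4 * piC) * (th1p p ^ 2 / th1 p ^ 2) * th4 p
  + Ci / 2 * vt4 p ^ 2 * th1p p * (th2 p * th3 p / th1 p ^ 2)
  - Ci * piC / 4 * vt2 p ^ 2 * vt4 p ^ 2 * (th3 p ^ 2 / th1 p ^ 2) * th4 p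
  + Ci / piC * Lam0 p * th4 p.
Definition Ft5 (p : St) : C :=
  - Ci / (4 * piC) * (th1p p ^ 3 / th1 p ^ 2)
  + 3 * Ci / piC * (piC ^ 2 / 4 * vt3 p ^ 2 * vt4 p ^ 2 * (th2 p ^ 2 / th1 p ^ 2)
                    + Lam0 p) * th1p p
  - Ci / 2 * piC ^ 2 * vt2 p ^ 2 * vt3 p ^ 2 * vt4 p ^ 2
      * (th2 p * th3 p * th4 p / th1 p ^ 2).

(* The z-flow: coefficients do not depend on z. *)
Definition Xz (p : St) : St :=
  mkSt (Fz1 p) (Fz2 p) (Fz3 p) (Fz4 p) (Fz5 p) 0 0 0 0.

(* The tau-flow, where d2 d3 d4 de are the (a priori unknown) values of
   d vartheta_2/d tau, d vartheta_3/d tau, d vartheta_4/d tau, d eta/d tau. *)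
Definition Xt (d2 d3 d4 de : C) (p : St) : St :=
  mkSt (Ft1 p) (Ft2 p) (Ft3 p) (Ft4 p) (Ft5 p) d2 d3 d4 de.

(* Compatibility: for each of the five unknowns, the mixed derivative
   d_tau (d_z u) (= derivative of the (S_z) right-hand side along the tau-flow)
   and d_z (d_tau u) (= derivative of the (S_tau) right-hand side along the
   z-flow) exist and agree. *)
Definition Compatible (d2 d3 d4 de : C) (p : St) : Prop :=
  (exists c, DerAlong Fz1 p (Xt d2 d3 d4 de p) c /\ DerAlong Ft1 p (Xz p) c) /\
  (exists c, DerAlong Fz2 p (Xt d2 d3 d4 de p) c /\ DerAlong Ft2 p (Xz p) c) /\
  (exists c, DerAlong Fz3 p (Xt d2 d3 d4 de p) c /\ DerAlong Ft3 p (Xz p) c) /\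
  (exists c, DerAlong Fz4 p (Xt d2 d3 d4 de p) c /\ DerAlong Ft4 p (Xz p) c) /\
  (exists c, DerAlong Fz5 p (Xt d2 d3 d4 de p) c /\ DerAlong Ft5 p (Xz p) c).

Definition A4 (p : St) : C :=
  (vt2 p ^ 2 * th4 p ^ 2 - vt4 p ^ 2 * th2 p ^ 2) / (vt3 p ^ 2 * th1 p ^ 2).
Definition B4 (p : St) : C :=
  (vt2 p ^ 2 * th3 p ^ 2 - vt3 p ^ 2 * th2 p ^ 2) / (vt4 p ^ 2 * th1 p ^ 2).

Definition dvt2 (p : St) : C :=
  Ci / piC * (eta p + piC ^ 2 / 12 * (vt3 p ^ 4 + vt4 p ^ 4)) * vt2 p.
Definition dvt3 (p : St) : C :=
  Ci / piC * (eta p + piC ^ 2 / 12 * (vt3 p ^ 4 + vt4 p ^ 4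
                                       - 3 * B4 p * vt4 p ^ 4)) * vt3 p.
Definition dvt4 (p : St) : C :=
  Ci / piC * (eta p + piC ^ 2 / 12 * (vt3 p ^ 4 + vt4 p ^ 4
                                       - 3 * A4 p * vt3 p ^ 4)) * vt4 p.
Definition deta (p : St) : C :=
  Ci / piC * 2 * eta p ^ 2
  - piC ^ 3 / 72 * Ci
    * (vt3 p ^ 8
       + (9 * A4 p * B4 p - 6 * A4 p - 6 * B4 p + 2) * vt3 p ^ 4 * vt4 p ^ 4
       + vt4 p ^ 8).

From Stdlib Require Import Reals Lra.
From Coquelicot Require Import Coquelicot.
Open Scope C_scope.

(* The compatibility conditions are identities between rational functions of the
   phase-space point.  Since (S_z) leaves the coefficients constant, the mixed-derivative
   defect of theta_2, theta_3, theta_4 is a multiple of vt_k theta_l theta_m / theta_1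
   times (d_k - dvt_k); for theta_1 it vanishes identically, and once d_2, d_3, d_4 are
   fixed the defect of theta_1' is 4 theta_1 (de - deta).  Each derivative along a flow is
   computed syntactically by the differentiation rules, and the resulting identities are
   checked by [field]. *)

Notation is_Cderive := (@is_derive C_AbsRing C_NormedModule).

(* Coquelicot's product and chain rules are stated over [AbsRing_NormedModule C_AbsRing],
   whose linearity component is not convertible with that of [C_NormedModule]. *)
Lemma is_Cderive_of_AbsRing (f : C -> C) (x l : C) :
  @is_derive C_AbsRing (AbsRing_NormedModule C_AbsRing) f x l -> is_Cderive f x l.
Proof. intros [_ H]; split; [apply is_linear_scal_l | exact H]. Qed.

Lemma is_AbsRing_derive_of_C (f : C -> C) (x l : C) :
  is_Cderive f x l -> @is_derive C_AbsRing (AbsRing_NormedModule C_AbsRing) f x l.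
Proof. intros [_ H]; split; [apply is_linear_scal_l | exact H]. Qed.

(* For [|y - w| < |w|/2] one has [|y| > |w|/2] and
   [/y - /w + (y - w)/w^2 = (y - w)^2/(y w^2)], a remainder of size [2|y - w|^2/|w|^3]. *)
Lemma is_Cderive_Cinv (w : C) : w <> 0 -> is_Cderive Cinv w (- / (w * w)).
Proof.
  intros Hw; split; [apply is_linear_scal_l |].
  intros x Hx.
  apply (@is_filter_lim_locally_unique C_AbsRing (AbsRing_NormedModule C_AbsRing)) in Hx.
  subst x; intros eps.
  apply (@locally_norm_le_locally C_AbsRing (AbsRing_NormedModule C_AbsRing)).
  assert (Hw0 : (0 < Cmod w)%R) by (apply Cmod_gt_0; exact Hw).
  assert (Heps : (0 < eps)%R) by apply cond_pos.
  assert (Hdelta : (0 < Rmin (Cmod w / 2) (eps * Cmod w ^ 3 / 2))%R).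
  { apply Rmin_pos; [lra |]. pose proof (pow_lt _ 3 Hw0); nra. }
  exists (mkposreal _ Hdelta); intros y Hy; change C in y.
  change (Cmod (y - w) < Rmin (Cmod w / 2) (eps * Cmod w ^ 3 / 2))%R in Hy.
  change (Cmod ((/ y - / w) - (y - w) * (- / (w * w))) <= eps * Cmod (y - w))%R.
  assert (Hclose : (Cmod (y - w) < Cmod w / 2)%R)
    by (eapply Rlt_le_trans; [exact Hy | apply Rmin_l]).
  assert (Hsmall : (Cmod (y - w) < eps * Cmod w ^ 3 / 2)%R)
    by (eapply Rlt_le_trans; [exact Hy | apply Rmin_r]).
  assert (Hy_large : (Cmod w / 2 < Cmod y)%R).
  { pose proof (Cmod_triangle y (w - y)) as Htri.
    replace (y + (w - y)) with w in Htri by ring.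
    replace (w - y) with (- (y - w)) in Htri by ring; rewrite Cmod_opp in Htri; lra. }
  assert (Hy0 : y <> 0) by (intros ->; rewrite Cmod_0 in Hy_large; lra).
  replace ((/ y - / w) - (y - w) * (- / (w * w)))
    with ((y - w) * ((y - w) / (y * w * w))) by (field; split; assumption).
  rewrite Cmod_mult, Cmod_div, !Cmod_mult by (repeat apply Cmult_neq_0; assumption).
  rewrite Rmult_comm; apply Rmult_le_compat_r; [apply Cmod_ge_0 |].
  apply Rle_div_l; [repeat apply Rmult_lt_0_compat; lra |].
  apply Rle_trans with (eps * Cmod w ^ 3 / 2)%R; [lra |].
  replace (eps * Cmod w ^ 3 / 2)%R with (eps * (Cmod w * Cmod w * (Cmod w / 2)))%R
    by (simpl; field).
  replace (Cmod y * Cmod w * Cmod w)%R with (Cmod w * Cmod w * Cmod y)%R by ring.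
  apply Rmult_le_compat_l; [lra |].
  apply Rmult_le_compat_l; [apply Rmult_le_pos |]; lra.
Qed.

Section Rules.

Variable x : C.

Lemma is_Cderive_eq (f : C -> C) (l l' : C) : is_Cderive f x l -> l = l' -> is_Cderive f x l'.
Proof. intros H <-; exact H. Qed.

Lemma is_Cderive_const (a : C) : is_Cderive (fun _ => a) x (RtoC 0).
Proof. exact (is_derive_const a x). Qed.

Lemma is_Cderive_id : is_Cderive (fun s => s) x (RtoC 1).
Proof.
  eapply is_Cderive_eq; [apply is_Cderive_of_AbsRing, (@is_derive_id C_AbsRing) | reflexivity].
Qed.

Lemma is_Cderive_plus (f g : C -> C) (a b : C) :
  is_Cderive f x a -> is_Cderive g x b -> is_Cderive (fun s => f s + g s) x (a + b).
Proof. exact (@is_derive_plus C_AbsRing C_NormedModule f g x a b). Qed.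

Lemma is_Cderive_opp (f : C -> C) (a : C) :
  is_Cderive f x a -> is_Cderive (fun s => - f s) x (- a).
Proof. exact (@is_derive_opp C_AbsRing C_NormedModule f x a). Qed.

Lemma is_Cderive_minus (f g : C -> C) (a b : C) :
  is_Cderive f x a -> is_Cderive g x b -> is_Cderive (fun s => f s - g s) x (a - b).
Proof. intros Hf Hg; apply is_Cderive_plus; [exact Hf | apply is_Cderive_opp, Hg]. Qed.

Lemma is_Cderive_mult (f g : C -> C) (a b : C) :
  is_Cderive f x a -> is_Cderive g x b ->
  is_Cderive (fun s => f s * g s) x (a * g x + f x * b).
Proof.
  intros Hf Hg; apply is_Cderive_of_AbsRing.
  apply (is_derive_mult f g); [apply is_AbsRing_derive_of_C.. | exact Cmult_comm]; assumption.
Qed.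

Lemma is_Cderive_inv (f : C -> C) (a : C) :
  f x <> 0 -> is_Cderive f x a -> is_Cderive (fun s => / f s) x (a * - / (f x * f x)).
Proof.
  intros Hfx Hf.
  apply (is_derive_comp Cinv f); [apply is_Cderive_Cinv, Hfx | apply is_AbsRing_derive_of_C, Hf].
Qed.

Lemma is_Cderive_div (f g : C -> C) (a b : C) :
  g x <> 0 -> is_Cderive f x a -> is_Cderive g x b ->
  is_Cderive (fun s => f s / g s) x (a * / g x + f x * (b * - / (g x * g x))).
Proof.
  intros Hgx Hf Hg.
  apply (is_Cderive_mult f (fun s => / g s)); [| apply is_Cderive_inv]; assumption.
Qed.

Lemma is_Cderive_pow (f : C -> C) (a : C) (n : nat) :
  is_Cderive f x a -> is_Cderive (fun s => f s ^ n) x (INR n * a * f x ^ pred n).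
Proof.
  intros Hf; induction n as [| n IH].
  - eapply is_Cderive_eq; [apply (is_Cderive_const 1) | simpl; ring].
  - eapply is_Cderive_eq; [apply (is_Cderive_mult f (fun s => f s ^ n)); eassumption |].
    rewrite S_INR, RtoC_plus; destruct n as [| n]; [simpl; ring |].
    rewrite S_INR, RtoC_plus; simpl; ring.
Qed.

End Rules.

Lemma RtoC_neq_0 (r : R) : r <> 0%R -> RtoC r <> 0.
Proof. intros Hr E; injection E; exact Hr. Qed.

Lemma piC_neq_0 : piC <> 0.
Proof. exact (RtoC_neq_0 _ PI_neq0). Qed.

Ltac nonzero :=
  cbv beta; rewrite ?Cmult_0_l, ?Cplus_0_r;
  repeat first [ apply Cpow_nz | apply Cmult_neq_0 ];
  first [ assumption | exact piC_neq_0 | apply RtoC_neq_0; lra ].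

Ltac Cderive_const :=
  lazymatch goal with |- is_Cderive (fun s => ?a) _ _ => apply (is_Cderive_const _ a) end.

Ltac Cderive :=
  first [ Cderive_const | Cderive_rule ]
with Cderive_rule :=
  lazymatch goal with
  | |- is_Cderive (fun s => s) _ _ => apply is_Cderive_id
  | |- is_Cderive (fun s => Cplus (@?f s) (@?g s)) _ _ => apply (is_Cderive_plus _ f g); Cderive
  | |- is_Cderive (fun s => Cminus (@?f s) (@?g s)) _ _ => apply (is_Cderive_minus _ f g); Cderive
  | |- is_Cderive (fun s => Copp (@?f s)) _ _ => apply (is_Cderive_opp _ f); Cderive
  | |- is_Cderive (fun s => Cmult (@?f s) (@?g s)) _ _ => apply (is_Cderive_mult _ f g); Cderive
  | |- is_Cderive (fun s => Cdiv (@?f s) (@?g s)) _ _ =>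
      apply (is_Cderive_div _ f g); [nonzero | Cderive | Cderive]
  | |- is_Cderive (fun s => Cpow (@?f s) ?n) _ _ => eapply (is_Cderive_pow _ f _ n); Cderive
  end.

Lemma DerAlong_unique (F : St -> C) (p X : St) (c1 c2 : C) :
  DerAlong F p X c1 -> DerAlong F p X c2 -> c1 = c2.
Proof.
  intros H1 H2; apply is_C_derive_unique in H1, H2; congruence.
Qed.

Lemma ex_common_DerAlong_iff (F G : St -> C) (p X Y : St) (c1 c2 : C) :
  DerAlong F p X c1 -> DerAlong G p Y c2 ->
  ((exists c, DerAlong F p X c /\ DerAlong G p Y c) <-> c1 = c2).
Proof.
  intros H1 H2; split.
  - intros (c & HF & HG).
    rewrite (DerAlong_unique _ _ _ _ _ H1 HF); exact (DerAlong_unique _ _ _ _ _ HG H2).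
  - intros <-; exists c1; split; assumption.
Qed.

Lemma eq_iff_of_scaled_diff (u v x y a b : C) :
  a <> 0 -> b <> 0 -> a * (v - u) = b * (x - y) -> (u = v <-> x = y).
Proof.
  intros Ha Hb E; rewrite (Ceq_minus x y).
  transitivity (v - u = 0); [rewrite <- Ceq_minus; split; congruence |].
  replace (x - y) with (/ b * (a * (v - u))) by (rewrite E; field; exact Hb).
  split; intros H.
  - rewrite H; ring.
  - replace (v - u) with (b / a * (/ b * (a * (v - u)))) by (field; split; assumption).
    rewrite H; ring.
Qed.

Lemma Cmult_eq_reg_l (a u v : C) : a <> 0 -> a * u = a * v -> u = v.
Proof.
  intros Ha E.
  replace u with (/ a * (a * u)) by (field; exact Ha).
  rewrite E; field; exact Ha.
Qed.

Ltac unfold_DerAlong F :=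
  unfold DerAlong, F, Lam0, shift, Xt, Xz; cbn [th1 th2 th3 th4 th1p vt2 vt3 vt4 eta].

Ltac system_field :=
  cbv beta; rewrite ?Cmult_0_l, ?Cplus_0_r;
  unfold Fz1, Fz2, Fz3, Fz4, Fz5, Ft1, Ft2, Ft3, Ft4, Ft5, dvt2, dvt3, dvt4, deta, A4, B4, Lam0;
  rewrite ?INR_IZR_INZ; cbn [Z.of_nat Pos.of_succ_nat Pos.succ Cpow pred];
  field; repeat split; first [ assumption | exact piC_neq_0 ].

Section System.

Variable p : St.
Hypothesis th1_neq_0 : th1 p <> 0.
Hypothesis vt3_neq_0 : vt3 p <> 0.
Hypothesis vt4_neq_0 : vt4 p <> 0.

Lemma DerAlong_A4_Xz : DerAlong A4 p (Xz p) 0.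
Proof. unfold_DerAlong A4; eapply is_Cderive_eq; [Cderive | system_field]. Qed.

Lemma DerAlong_B4_Xz : DerAlong B4 p (Xz p) 0.
Proof. unfold_DerAlong B4; eapply is_Cderive_eq; [Cderive | system_field]. Qed.

Lemma DerAlong_A4_Xt : DerAlong A4 p (Xt (dvt2 p) (dvt3 p) (dvt4 p) (deta p) p) 0.
Proof. unfold_DerAlong A4; eapply is_Cderive_eq; [Cderive | system_field]. Qed.

Lemma DerAlong_B4_Xt : DerAlong B4 p (Xt (dvt2 p) (dvt3 p) (dvt4 p) (deta p) p) 0.
Proof. unfold_DerAlong B4; eapply is_Cderive_eq; [Cderive | system_field]. Qed.

Lemma compatible_th1 (d2 d3 d4 de : C) :
  exists c, DerAlong Fz1 p (Xt d2 d3 d4 de p) c /\ DerAlong Ft1 p (Xz p) c.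
Proof.
  eexists; split; [| unfold_DerAlong Ft1; Cderive].
  unfold_DerAlong Fz1; eapply is_Cderive_eq; [Cderive | system_field].
Qed.

Lemma compatible_th2_iff (d2 d3 d4 de : C) :
  (exists c, DerAlong Fz2 p (Xt d2 d3 d4 de p) c /\ DerAlong Ft2 p (Xz p) c) <->
  vt2 p * th3 p * th4 p * d2 = vt2 p * th3 p * th4 p * dvt2 p.
Proof.
  eassert (Hz : DerAlong Fz2 p (Xt d2 d3 d4 de p) _) by (unfold_DerAlong Fz2; Cderive).
  eassert (Ht : DerAlong Ft2 p (Xz p) _) by (unfold_DerAlong Ft2; Cderive).
  rewrite (ex_common_DerAlong_iff _ _ _ _ _ _ _ Hz Ht).
  apply (eq_iff_of_scaled_diff _ _ _ _ (th1 p) (2 * piC)); [assumption | nonzero | system_field].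
Qed.

Lemma compatible_th3_iff (d2 d3 d4 de : C) :
  (exists c, DerAlong Fz3 p (Xt d2 d3 d4 de p) c /\ DerAlong Ft3 p (Xz p) c) <->
  vt3 p * th2 p * th4 p * d3 = vt3 p * th2 p * th4 p * dvt3 p.
Proof.
  eassert (Hz : DerAlong Fz3 p (Xt d2 d3 d4 de p) _) by (unfold_DerAlong Fz3; Cderive).
  eassert (Ht : DerAlong Ft3 p (Xz p) _) by (unfold_DerAlong Ft3; Cderive).
  rewrite (ex_common_DerAlong_iff _ _ _ _ _ _ _ Hz Ht).
  apply (eq_iff_of_scaled_diff _ _ _ _ (th1 p) (2 * piC)); [assumption | nonzero | system_field].
Qed.

Lemma compatible_th4_iff (d2 d3 d4 de : C) :
  (exists c, DerAlong Fz4 p (Xt d2 d3 d4 de p) c /\ DerAlong Ft4 p (Xz p) c) <->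
  vt4 p * th2 p * th3 p * d4 = vt4 p * th2 p * th3 p * dvt4 p.
Proof.
  eassert (Hz : DerAlong Fz4 p (Xt d2 d3 d4 de p) _) by (unfold_DerAlong Fz4; Cderive).
  eassert (Ht : DerAlong Ft4 p (Xz p) _) by (unfold_DerAlong Ft4; Cderive).
  rewrite (ex_common_DerAlong_iff _ _ _ _ _ _ _ Hz Ht).
  apply (eq_iff_of_scaled_diff _ _ _ _ (th1 p) (2 * piC)); [assumption | nonzero | system_field].
Qed.

Lemma compatible_th1p_iff (de : C) :
  (exists c, DerAlong Fz5 p (Xt (dvt2 p) (dvt3 p) (dvt4 p) de p) c /\
             DerAlong Ft5 p (Xz p) c) <->
  de = deta p.
Proof.
  eassert (Hz : DerAlong Fz5 p (Xt (dvt2 p) (dvt3 p) (dvt4 p) de p) _)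
    by (unfold_DerAlong Fz5; Cderive).
  eassert (Ht : DerAlong Ft5 p (Xz p) _) by (unfold_DerAlong Ft5; Cderive).
  rewrite (ex_common_DerAlong_iff _ _ _ _ _ _ _ Hz Ht).
  apply (eq_iff_of_scaled_diff _ _ _ _ 1 (4 * th1 p)); [exact C1_nz | nonzero | system_field].
Qed.

End System.

Theorem theorem7p1 :
  forall p : St,
    th1 p <> 0 -> vt3 p <> 0 -> vt4 p <> 0 ->
    (forall d2 d3 d4 de : C,
        (d2 = dvt2 p /\ d3 = dvt3 p /\ d4 = dvt4 p /\ de = deta p ->
         Compatible d2 d3 d4 de p) /\
        (th2 p <> 0 -> th3 p <> 0 -> th4 p <> 0 -> vt2 p <> 0 ->
         Compatible d2 d3 d4 de p ->
         d2 = dvt2 p /\ d3 = dvt3 p /\ d4 = dvt4 p /\ de = deta p)) /\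
    DerAlong A4 p (Xz p) 0 /\ DerAlong B4 p (Xz p) 0 /\
    DerAlong A4 p (Xt (dvt2 p) (dvt3 p) (dvt4 p) (deta p) p) 0 /\
    DerAlong B4 p (Xt (dvt2 p) (dvt3 p) (dvt4 p) (deta p) p) 0.
Proof.
  intros p Hth1 Hvt3 Hvt4.
  split; [| auto using DerAlong_A4_Xz, DerAlong_B4_Xz, DerAlong_A4_Xt, DerAlong_B4_Xt].
  intros d2 d3 d4 de; unfold Compatible.
  rewrite compatible_th2_iff, compatible_th3_iff, compatible_th4_iff by assumption.
  split.
  - intros (-> & -> & -> & ->).
    rewrite compatible_th1p_iff by assumption.
    auto using compatible_th1.
  - intros Hth2 Hth3 Hth4 Hvt2 (_ & E2 & E3 & E4 & E5).
    apply Cmult_eq_reg_l in E2; [| repeat apply Cmult_neq_0; assumption].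
    apply Cmult_eq_reg_l in E3; [| repeat apply Cmult_neq_0; assumption].
    apply Cmult_eq_reg_l in E4; [| repeat apply Cmult_neq_0; assumption].
    subst d2 d3 d4.
    rewrite compatible_th1p_iff in E5 by assumption.
    auto.
Qed.
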